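(* Let $q=2v+1$ be a prime power where $v=k_1k_2\cdots k_r$ with $k_1,\dots,k_r$ pairwise coprime odd integers, each $k_i\ge 3$. Then there exists a $(v,\{k_1,\dots,k_r\})$ Heffter space over the additive group of $\mathbb F_q$.
   Context: A half-set of an abelian group $G$ of odd order $2v+1\ge7$ is a subset $V\subseteq G\setminus\{0\}$ containing exactly one element of each pair $\{g,-g\}$, $g\ne0$. A $(v,k)$ Heffter system on $V$ is a partition of $V$ into blocks of size $k$, each summing to $0$ in $G$. A $(v,\{k_1,\dots,k_r\})$ Heffter space over $G$ is a partial linear space (any two distinct points lie in at most one block) with point set a half-set $V$ of $G$, together with a resolution of its blocks into $r$ parallel classes $\mathcal P_1,\dots,\mathcal P_r$ (each a partition of $V$), where $\mathcal P_i$ is a $(v,k_i)$ Heffter system. *)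

From HB Require Import structures.
From mathcomp Require Import all_boot all_order all_algebra all_field.
Set Implicit Arguments. Unset Strict Implicit. Unset Printing Implicit Defensive.
Import GRing.Theory.
Local Open Scope ring_scope.

Definition half_set (G : finZmodType) (V : {set G}) : Prop :=
  (0 \notin V) /\ (forall g : G, g != 0 -> (g \in V) != (- g \in V)).

Definition heffter_system (G : finZmodType) (V : {set G}) (k : nat)
    (P : {set {set G}}) : Prop :=
  partition P V /\
  (forall B, B \in P -> #|B| = k /\ \sum_(x in B) x = 0).

(* A (v,{k_1,...,k_r}) Heffter space over G with ks = [:: k_1; ...; k_r]:
   a half-set V, parallel classes P_i (i < r) with P_i a (v,k_i) Heffter
   system on V, and the blocks (counted over all classes, as a resolution)
   form a partial linear space: two distinct blocks share at most one point. *)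
Definition heffter_space (G : finZmodType) (ks : seq nat) (V : {set G})
    (P : 'I_(size ks) -> {set {set G}}) : Prop :=
  half_set V /\
  (forall i : 'I_(size ks), heffter_system V (nth 0%N ks i) (P i)) /\
  (forall (i j : 'I_(size ks)) (B B' : {set G}),
      B \in P i -> B' \in P j -> (i, B) != (j, B') -> #|B :&: B'| <= 1)%N.

From HB Require Import structures.
From mathcomp Require Import all_boot all_order all_algebra all_field.
Set Implicit Arguments. Unset Strict Implicit. Unset Printing Implicit Defensive.
Import GRing.Theory.
Local Open Scope ring_scope.

(* Write q = 2v + 1.  The v-th roots of unity form the index-2 subgroup V of
   F^*, a half-set because v is odd and x^v = -1 for every nonzero x outside
   V.  For k dividing v, the fibres of x |-> x^k on V are the cosets
   x * {1, w, ..., w^(k-1)} of the k-th roots of unity (w a primitive one), so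
   they have size k and sum to 0.  For coprime k and l, a k-fibre and an
   l-fibre meet in a coset of the group of roots of unity of order dividing
   both k and l, which is trivial. *)

Lemma expr_coprime_eq1 (R : pzSemiRingType) (x : R) (a b : nat) :
  (0 < a)%N -> coprime a b -> x ^+ a = 1 -> x ^+ b = 1 -> x = 1.
Proof.
move=> a_gt0 co_ab xa xb; have [c _] := Bezoutl b a_gt0.
rewrite (eqP co_ab) => /dvdnP[d def_d].
have : x ^+ (1 + c * b) = x ^+ (d * a) by rewrite def_d.
by rewrite exprD expr1 mulnC [(d * a)%N]mulnC !exprM xb xa !expr1n mulr1.
Qed.

Lemma finField_prim_root (F : finFieldType) (n : nat) :
  (n %| #|F|.-1)%N -> exists w : F, n.-primitive_root w.
Proof.
move=> n_dvd; have card_gt1 : (1 < #|F|)%N.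
  by rewrite (cardD1 (0 : F)) (cardD1 (1 : F)) !inE oner_neq0.
have : has (#|F|.-1).-primitive_root (enum (predC1 (0 : F))).
  apply: cyclic.has_prim_root; last by rewrite -cardE cardC1.
  - by rewrite -ltnS prednK // ltnW.
  - apply/allP => x; rewrite mem_enum /= => x_neq0.
    apply/unity_rootP; apply: (mulfI x_neq0).
    by rewrite -exprS prednK ?expf_card ?mulr1 // ltnW.
  - exact: enum_uniq.
by case/hasP=> z _ z_prim; exists (z ^+ (#|F|.-1 %/ n)); exact: dvdn_prim_root.
Qed.

Definition unity_roots {F : finFieldType} (n : nat) : {set F} :=
  [set x | x ^+ n == 1].

Definition power_fibre {F : finFieldType} (k : nat) (x : F) : {set F} :=
  [set y | y ^+ k == x ^+ k].

Section PowerFibre.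

Variables (F : finFieldType) (k : nat) (w : F).
Hypothesis w_prim : k.-primitive_root w.

Lemma power_fibreE (x : F) :
  x != 0 -> power_fibre k x = [set x * w ^+ j | j : 'I_k].
Proof.
move=> x_neq0; apply/setP => y; rewrite inE; apply/eqP/imsetP.
- move=> yk; have : (y / x) ^+ k = 1 by rewrite exprMn exprVn yk divff ?expf_neq0.
  by case/(prim_rootP w_prim) => j def_j; exists j; rewrite // -def_j mulrC divfK.
- move=> [j _ ->]; rewrite exprMn -exprM mulnC exprM.
  by rewrite (prim_expr_order w_prim) expr1n mulr1.
Qed.

Lemma power_fibre_coset_inj (x : F) :
  x != 0 -> injective (fun j : 'I_k => x * w ^+ j).
Proof.
move=> x_neq0 i j /(mulfI x_neq0) /eqP.
by rewrite (eq_prim_root_expr w_prim) !modn_small // => /eqP/val_inj.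
Qed.

Lemma card_power_fibre (x : F) : x != 0 -> #|power_fibre k x| = k.
Proof.
move=> x_neq0; rewrite power_fibreE // card_imset ?card_ord //.
exact: power_fibre_coset_inj.
Qed.

Lemma sum_power_fibre (x : F) :
  (1 < k)%N -> x != 0 -> \sum_(y in power_fibre k x) y = 0.
Proof.
move=> k_gt1 x_neq0; rewrite power_fibreE // big_imset /=; last first.
  by move=> i j _ _; apply: power_fibre_coset_inj.
have w_neq1 : w != 1 by rewrite -[w]expr1 -(prim_order_dvd w_prim) dvdn1 gtn_eqF.
have : (w - 1) * \sum_(j < k) w ^+ j = 0.
  by rewrite -subrX1 (prim_expr_order w_prim) subrr.
rewrite -mulr_sumr => /eqP; rewrite mulf_eq0 subr_eq0 (negPf w_neq1) => /eqP->.
by rewrite mulr0.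
Qed.

End PowerFibre.

Lemma card_power_fibreI_le1 (F : finFieldType) (k l : nat) (x x' : F) :
  (0 < k)%N -> coprime k l -> x != 0 ->
  (#|power_fibre k x :&: power_fibre l x'| <= 1)%N.
Proof.
move=> k_gt0 co_kl x_neq0; apply/card_le1_eqP => y1 y2.
rewrite !inE => /andP[/eqP y1k /eqP y1l] /andP[/eqP y2k /eqP y2l].
have y2_neq0 : y2 != 0.
  have : y2 ^+ k != 0 by rewrite y2k expf_neq0.
  by apply: contra_neq => ->; rewrite expr0n gtn_eqF.
have kl_root (m : nat) : y1 ^+ m = y2 ^+ m -> (y1 / y2) ^+ m = 1.
  by move=> ym; rewrite exprMn exprVn ym divff ?expf_neq0.
have /(canRL (divfK y2_neq0)) := expr_coprime_eq1 k_gt0 co_kl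
  (kl_root _ (etrans y1k (esym y2k))) (kl_root _ (etrans y1l (esym y2l))).
by rewrite mul1r.
Qed.

Definition power_classes {F : finFieldType} (n k : nat) : {set {set F}} :=
  preim_partition (fun x : F => x ^+ k) (unity_roots n).

Lemma unity_roots_neq0 (F : finFieldType) (n : nat) (x : F) :
  (0 < n)%N -> x \in unity_roots n -> x != 0.
Proof.
move=> n_gt0; rewrite inE; apply: contraTneq => ->.
by rewrite expr0n gtn_eqF // eq_sym oner_eq0.
Qed.

Lemma power_classesP (F : finFieldType) (n k : nat) (B : {set F}) :
  (0 < n)%N -> (k %| n)%N -> B \in power_classes n k ->
  exists2 x, x != 0 & B = power_fibre k x.
Proof.
move=> n_gt0 /dvdnP[m def_n] /imsetP[x x1 ->]; exists x; first exact: unity_roots_neq0 x1.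
apply/setP => y; rewrite !inE [x ^+ k == _]eq_sym andb_idl // => /eqP yk.
by move: x1; rewrite !inE def_n mulnC !exprM yk.
Qed.

Section HalfUnityRoots.

Variables (F : finFieldType) (v : nat).
Hypotheses (cardF : #|F| = (2 * v + 1)%N) (v_odd : odd v).

Lemma oppr1_neq1 : (-1 : F) != 1.
Proof.
have [w w_prim] : exists w : F, 2.-primitive_root w.
  by apply: finField_prim_root; rewrite cardF addn1 dvdn_mulr.
apply: contra_neq (prim_root_natf_neq0 w_prim) => m1_eq1.
by apply/eqP; rewrite addr_eq0 m1_eq1.
Qed.

Lemma expr_half_card (x : F) : x != 0 -> (x ^+ v == 1) || (x ^+ v == -1).
Proof.
move=> x_neq0; rewrite -sqrf_eq1 -exprM mulnC; apply/eqP/(mulfI x_neq0).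
by rewrite -exprS -addn1 -cardF expf_card mulr1.
Qed.

Lemma half_set_unity_roots : half_set (@unity_roots F v).
Proof.
split; first by apply/negP => /(unity_roots_neq0 (odd_gt0 v_odd)); rewrite eqxx.
move=> g g_neq0; rewrite !inE exprNn -signr_odd v_odd mulN1r.
by case/orP: (expr_half_card g_neq0) => /eqP->; rewrite ?opprK eqxx (negPf oppr1_neq1).
Qed.

Lemma heffter_system_power_classes (k : nat) :
  (k %| v)%N -> (2 < k)%N ->
  heffter_system (@unity_roots F v) k (power_classes v k).
Proof.
move=> k_dvd_v k_gt2.
split=> [|B /(power_classesP (odd_gt0 v_odd) k_dvd_v)[x x_neq0 ->]]; first exact: preim_partitionP.
have [w w_prim] : exists w : F, k.-primitive_root w.
  by apply: finField_prim_root; rewrite cardF addn1 dvdn_mull.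
by rewrite (card_power_fibre w_prim) // (sum_power_fibre w_prim) // ltnW.
Qed.

End HalfUnityRoots.

Lemma odd_prod (ks : seq nat) : all odd ks -> odd (\prod_(k <- ks) k).
Proof.
move=> ks_odd; rewrite big_seq; apply: (big_ind odd) => //= [m n m_odd n_odd|k /(allP ks_odd)//].
by rewrite oddM m_odd n_odd.
Qed.

Lemma pairwise_coprime_nth (ks : seq nat) (i j : nat) :
  pairwise coprime ks -> (i < size ks)%N -> (j < size ks)%N -> i != j ->
  coprime (nth 0 ks i) (nth 0 ks j).
Proof.
move=> /(pairwiseP 0) co_ks i_lt j_lt.
case: ltngtP => [lt_ij|lt_ji|->] //= _; first exact: co_ks.
by rewrite coprime_sym; apply: co_ks.
Qed.

Theorem theorem3p2 (F : finFieldType) (ks : seq nat) :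
  (0 < size ks)%N ->
  all odd ks ->
  all (fun k => 3 <= k)%N ks ->
  pairwise coprime ks ->
  #|F| = (2 * \prod_(k <- ks) k + 1)%N ->
  exists (V : {set F}) (P : 'I_(size ks) -> {set {set F}}),
    @heffter_space F ks V P.
Proof.
move=> _ ks_odd ks_ge3 ks_coprime cardF; set v := (\prod_(k <- ks) k)%N in cardF.
have v_odd : odd v := odd_prod ks_odd.
have v_gt0 : (0 < v)%N := odd_gt0 v_odd.
have k_dvd_v (i : 'I_(size ks)) : (nth 0 ks i %| v)%N.
  by rewrite /v (big_rem _ (mem_nth 0 (ltn_ord i))) dvdn_mulr.
have k_ge3 (i : 'I_(size ks)) : (3 <= nth 0 ks i)%N by apply: (allP ks_ge3); rewrite mem_nth.
exists (unity_roots v), (fun i => power_classes v (nth 0 ks i)).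
split; [exact: half_set_unity_roots | split => [i|i j B B' PiB PjB']].
  exact: heffter_system_power_classes.
case: (eqVneq i j) PjB' => [<-{j} PiB'|neq_ij PjB' _].
  rewrite xpair_eqE eqxx /= => neq_BB'.
  have /and3P[_ /trivIsetP tiP _] := preim_partitionP (fun x : F => x ^+ nth 0 ks i) (unity_roots v).
  by rewrite (disjoint_setI0 (tiP _ _ PiB PiB' neq_BB')) cards0.
have [x x_neq0 ->] := power_classesP v_gt0 (k_dvd_v i) PiB.
have [x' _ ->] := power_classesP v_gt0 (k_dvd_v j) PjB'.
apply: card_power_fibreI_le1 x_neq0; first exact: leq_trans (k_ge3 i).
exact: pairwise_coprime_nth.
Qed.
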